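(* Let $\mathbf{T}\in\{0,1\}^{n\times\ell}$ be a matrix all of whose columns are dirty, with $\delta(\mathbf{T})\le 2$. If $\ell\ge 5$, then there exists a vector $v\in\{0,1\}^\ell$ such that $d(v,\mathbf{T}[i])\le 1$ for all $i\in[n]$.
   Context: A column of a binary matrix is dirty if it contains both $0$ and $1$. $d$ denotes Hamming distance, $\mathbf{T}[i]$ is the $i$-th row of $\mathbf{T}$, and $\delta(\mathbf{T})=\max_{i\ne i'}d(\mathbf{T}[i],\mathbf{T}[i'])$. *)

From mathcomp Require Import all_boot all_order all_algebra.
Set Implicit Arguments. Unset Strict Implicit. Unset Printing Implicit Defensive.

Definition hamming (l : nat) (u v : 'I_l -> bool) : nat :=
  #|[set j : 'I_l | u j != v j]|.

Definition rowv (n l : nat) (T : 'M[bool]_(n, l)) (i : 'I_n) : 'I_l -> bool :=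
  fun j => T i j.

Definition dirty_col (n l : nat) (T : 'M[bool]_(n, l)) (j : 'I_l) : Prop :=
  (exists i, T i j = false) /\ (exists i, T i j = true).

Definition diam_le (n l : nat) (T : 'M[bool]_(n, l)) (k : nat) : Prop :=
  forall i i' : 'I_n, i != i' -> hamming (rowv T i) (rowv T i') <= k.

From mathcomp Require Import all_boot all_order all_algebra.
From mathcomp Require Import zify.

Set Implicit Arguments.
Unset Strict Implicit.
Unset Printing Implicit Defensive.

(* Fix a row x and record every row by the set of columns where it differs
   from x; the Hamming distance becomes the size of the symmetric difference
   of these sets, which all have at most two elements.  If none has two
   elements, x itself is a center.  Otherwise some set is a pair {p, q}, and
   every nonempty set meets it.  If neither p nor q lay in all nonempty sets,
   there would be sets D_t containing q but not p and D_u containing p but not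
   q; with five columns some column k avoids D_t and D_u, and the set covering
   k (the column is dirty) is {k, p} or {k, q}, which is at distance 3 from
   D_t or D_u respectively.  So some c in {p, q} lies in every nonempty set,
   and x with column c flipped is a center. *)

Section SetDistance.
Variable T : finType.
Implicit Types A B : {set T}.

Definition sdist A B := #|A :\: B| + #|B :\: A|.

Lemma sdistC A B : sdist A B = sdist B A.
Proof. exact: addnC. Qed.

Lemma sdists0 A : sdist A set0 = #|A|.
Proof. by rewrite /sdist setD0 set0D cards0 addn0. Qed.

Lemma sdist1s c B : c \in B -> sdist [set c] B = #|B|.-1.
Proof.
move=> cB; rewrite /sdist (cardsD1 c B) cB.
have /eqP -> : [set c] :\: B == set0 by rewrite setD_eq0 sub1set.
by rewrite cards0.
Qed.

Lemma sdist_meet A B :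
  1 < #|A| -> B != set0 -> sdist A B <= 2 -> exists2 z, z \in A & z \in B.
Proof.
rewrite -card_gt0 /sdist => A2 B0 AB.
have : 0 < #|A :&: B|.
  by have := cardsID B A; have := cardsID A B; rewrite setIC; lia.
by case/card_gt0P => z; rewrite inE => /andP[]; exists z.
Qed.

Lemma sdist_gt2 A B k p q :
  k \in A :\: B -> p \in A :\: B -> k != p -> q \in B :\: A -> 2 < sdist A B.
Proof.
move=> kAB pAB kp qBA.
have : 1 < #|A :\: B| by apply/card_gt1P; exists k, p.
have : 0 < #|B :\: A| by apply/card_gt0P; exists q.
rewrite /sdist; lia.
Qed.

Lemma card_le2_mem A a b z :
  #|A| <= 2 -> a \in A -> b \in A -> a != b -> z \in A -> (z == a) || (z == b).
Proof.
move=> A2 aA bA ab zA; apply/negPn/negP; rewrite negb_or => /andP[za zb].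
have : 2 < #|A| by apply/card_gt2P; exists a, b, z; rewrite (eq_sym b) za zb.
by rewrite ltnNge A2.
Qed.

End SetDistance.

Section CommonPoint.
Variables (I T : finType) (D : I -> {set T}).
Hypothesis D_le2 : forall i, #|D i| <= 2.
Hypothesis D_close : forall i i', sdist (D i) (D i') <= 2.
Hypothesis D_cover : forall k, exists i, k \in D i.
Hypothesis T_gt4 : 4 < #|T|.

Lemma meet_pair_other a i p q :
  p \in D a -> q \in D a -> p != q -> D i != set0 -> p \notin D i -> q \in D i.
Proof.
move=> pa qa pq Di pi.
have a2 : 1 < #|D a| by apply/card_gt1P; exists p, q.
have [z za zi] := sdist_meet a2 Di (D_close a i).
case/orP: (card_le2_mem (D_le2 a) pa qa pq za) => /eqP zE.
  by rewrite -zE zi in pi.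
by rewrite -zE.
Qed.

Lemma pair_outside_contra z t k w y :
  k \in D z -> w \in D z -> k != w -> k \notin D t -> w \notin D t ->
  y \in D t -> y != k -> y != w -> False.
Proof.
move=> kz wz kw kt wt yt yk yw.
have yz : y \notin D z.
  by apply/negP => /(card_le2_mem (D_le2 z) kz wz kw); rewrite (negbTE yk) (negbTE yw).
have : 2 < sdist (D z) (D t).
  by apply: (sdist_gt2 (k := k) (p := w) (q := y)); rewrite ?inE ?kz ?wz ?kt ?wt ?yt ?yz.
by rewrite ltnNge D_close.
Qed.

Lemma common_point a : 1 < #|D a| -> exists c, forall i, D i != set0 -> c \in D i.
Proof.
move=> a2; have /card_gt1P[p [q [pa qa pq]]] := a2.
have [/forallP Hp|/forallPn[t]] := boolP [forall i, (D i != set0) ==> (p \in D i)].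
  by exists p => i; apply/implyP.
rewrite negb_imply => /andP[t0 pt].
have [/forallP Hq|/forallPn[u]] := boolP [forall i, (D i != set0) ==> (q \in D i)].
  by exists q => i; apply/implyP.
rewrite negb_imply => /andP[u0 qu].
have qt := meet_pair_other pa qa pq t0 pt.
have pu : p \in D u by apply: (meet_pair_other qa pa) => //; rewrite eq_sym.
have [k] : exists k, k \in ~: (D t :|: D u).
  apply/card_gt0P; have := cardsC (D t :|: D u); have := (leq_card_setU (D t) (D u)).1.
  by have := D_le2 t; have := D_le2 u; lia.
rewrite !inE negb_or => /andP[kt ku].
have [kp kq] : k != p /\ k != q.
  by split; apply/eqP => kE; [move: ku | move: kt]; rewrite kE ?pu ?qt.
have [z kz] := D_cover k.
have z0 : D z != set0 by apply/set0Pn; exists k.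
have [w wa wz] := sdist_meet a2 z0 (D_close a z).
exfalso; case/orP: (card_le2_mem (D_le2 a) pa qa pq wa) => /eqP wE; rewrite wE in wz.
- by apply: (pair_outside_contra kz wz kp kt pt qt); rewrite eq_sym.
- by apply: (pair_outside_contra kz wz kq ku qu pu) => //; rewrite eq_sym.
Qed.

Lemma sdist_center : exists S, forall i, sdist S (D i) <= 1.
Proof.
have [/existsP[a Da]|] := boolP [exists a, 1 < #|D a|].
  have [c Hc] := common_point Da; exists [set c] => i.
  have [->|/Hc ci] := eqVneq (D i) set0; first by rewrite sdists0 cards1.
  by rewrite sdist1s //; have := D_le2 i; lia.
rewrite negb_exists => /forallP small; exists set0 => i.
by rewrite sdistC sdists0 -ltnS ltnNge small.
Qed.

End CommonPoint.

Definition flips (l : nat) (x u : 'I_l -> bool) : {set 'I_l} := [set j | x j != u j].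

Lemma hamming_flips (l : nat) (x u w : 'I_l -> bool) :
  hamming u w = sdist (flips x u) (flips x w).
Proof.
rewrite /hamming /sdist -(cardsID (flips x u) [set j | u j != w j]).
congr (_ + _); apply: eq_card => j;
  by rewrite !inE; case: (x j); case: (u j); case: (w j).
Qed.

Lemma flips_xor (l : nat) (x : 'I_l -> bool) (S : {set 'I_l}) :
  flips x (fun j => x j (+) (j \in S)) = S.
Proof. by apply/setP => j; rewrite inE; case: (x j); case: (j \in S). Qed.

Lemma hamming_rows_le (n l k : nat) (T : 'M[bool]_(n, l)) (i i' : 'I_n) :
  diam_le T k -> hamming (rowv T i) (rowv T i') <= k.
Proof.
move=> diam; have [<-|] := eqVneq i i'; last exact: diam.
suff /eqP -> : hamming (rowv T i) (rowv T i) == 0 by [].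
by rewrite cards_eq0; apply/eqP/setP => j; rewrite !inE eqxx.
Qed.

Theorem lemma11 (n l : nat) (T : 'M[bool]_(n, l)) :
  (forall j : 'I_l, dirty_col T j) ->
  diam_le T 2 ->
  5 <= l ->
  exists v : 'I_l -> bool, forall i : 'I_n, hamming v (rowv T i) <= 1.
Proof.
move=> dirty diam l5.
have [[i0 _] _] := dirty (Ordinal (leq_trans (isT : 0 < 5) l5)).
set x := rowv T i0.
have [S HS] : exists S, forall i, sdist S (flips x (rowv T i)) <= 1.
  apply: sdist_center => [i | i i' | j |]; last by rewrite card_ord.
  - exact: hamming_rows_le.
  - by rewrite -hamming_flips; apply: hamming_rows_le.
  - have [[i1 h1] [i2 h2]] := dirty j.
    by case hx: (x j); [exists i1 | exists i2]; rewrite inE hx /rowv ?h1 ?h2.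
by exists (fun j => x j (+) (j \in S)) => i; rewrite (hamming_flips x) flips_xor.
Qed.
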